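(* Let $F$ be an algebraically closed field, $m\geq 2$, $\beta=(m+\sqrt{m^2-4})/2$, and let $\mathbf d=(d_1,d_2)$ and $\mathbf e=(e_1,e_2)\neq(0,0)$ be pairs of non-negative integers with $\mathbf e\leq\mathbf d$ componentwise. If $d_2>\beta d_1$ and $\mathbf e\hookrightarrow\mathbf d$ (for the quiver $K(m)$), then $e_2>\beta e_1$.
   Context: $K(m)$ is the quiver with two vertices $1,2$ and $m$ arrows from $1$ to $2$; a representation of dimension vector $(d_1,d_2)$ is a tuple of linear maps $f_1,\ldots,f_m:V_1\to V_2$ with $\dim V_i=d_i$, and a subrepresentation of dimension vector $(e_1,e_2)$ is a pair of subspaces $U_1\subset V_1,U_2\subset V_2$ of dimensions $e_1,e_2$ with $f_k(U_1)\subset U_2$ for all $k$. One writes $\mathbf e\hookrightarrow\mathbf d$ if every representation of dimension vector $\mathbf d$ (equivalently, a general one, in the Zariski topology on the affine space of such representations) admits a subrepresentation of dimension vector $\mathbf e$. *)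

From HB Require Import structures.
From mathcomp Require Import all_boot all_order all_algebra all_field.
Set Implicit Arguments. Unset Strict Implicit. Unset Printing Implicit Defensive.
Import Order.TTheory GRing.Theory Num.Theory.
Local Open Scope ring_scope.

(* A representation of K(m) of dimension vector (d1,d2) over F: m linear maps
   V1 = F^d1 -> V2 = F^d2, encoded as matrices acting on row vectors
   (v |-> v *m f k). *)
Definition Kmrep (F : fieldType) (m d1 d2 : nat) := 'I_m -> 'M[F]_(d1, d2).

Definition has_subrep (F : fieldType) (m d1 d2 : nat) (f : Kmrep F m d1 d2)
    (e1 e2 : nat) : Prop :=
  exists (U1 : 'M[F]_d1) (U2 : 'M[F]_d2),
    [/\ \rank U1 = e1, \rank U2 = e2 & forall k : 'I_m, (U1 *m f k <= U2)%MS].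

Definition subrep_arrow (F : fieldType) (m e1 e2 d1 d2 : nat) : Prop :=
  forall f : Kmrep F m d1 d2, has_subrep f e1 e2.

Definition beta (m : nat) : algC :=
  ((m%:R + sqrtC ((m%:R : algC) ^+ 2 - 4)) / 2)%R.

From HB Require Import structures.
From mathcomp Require Import all_boot all_order all_algebra all_field.
From mathcomp Require Import ring.
Set Implicit Arguments. Unset Strict Implicit. Unset Printing Implicit Defensive.
Import Order.TTheory GRing.Theory Num.Theory.
Local Open Scope ring_scope.

(* Call a representation f of K(m) b-expanding when every nonzero subspace U
   of V1 satisfies dim (f_1 U + ... + f_m U) > b dim U.  If f is
   beta-expanding, a subrepresentation (U1, U2) with U1 <> 0 has
   e2 >= dim (sum_k f_k U1) > beta e1, so it suffices to construct a
   beta-expanding representation of every dimension vector (d1, d2) with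
   d2 > beta d1.  When d2 >= m d1, the m block inclusions F^d1 -> (F^d1)^m
   do, since beta < m.  Otherwise (m d1 - d2, d1) again lies above the line
   of slope beta and has a smaller second entry; the reflection functor,
   i.e. the cokernel of the map V1 -> V2^m collecting a representation of
   that dimension, turns a beta-expanding representation into one of
   dimension (d1, d2).  Both slope computations rest on beta (m - beta) = 1. *)

Section Slope.

Variables (R : numFieldType) (m : nat) (b : R).
Hypotheses (b_gt0 : 0 < b) (b_root : b * (m%:R - b) = 1).

Lemma subr_slope_gt0 : 0 < m%:R - b.
Proof. by rewrite -(pmulr_rgt0 _ b_gt0) b_root ltr01. Qed.

Lemma slope_reflection (d1 d2 : nat) :
  b * d1%:R < d2%:R -> (d2 <= m * d1)%N -> b * (m * d1 - d2)%N%:R < d1%:R.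
Proof.
move=> lt_d hd2; rewrite natrB // natrM -subr_gt0.
have -> : d1%:R - b * (m%:R * d1%:R - d2%:R)
    = b * (d2%:R - b * d1%:R) + (1 - b * (m%:R - b)) * d1%:R by ring.
by rewrite b_root subrr mul0r addr0 mulr_gt0 ?subr_gt0.
Qed.

Lemma slope_quotient (r c e : nat) :
  (r + c = m * e)%N -> b * c%:R < e%:R -> b * e%:R < r%:R.
Proof.
move=> rc lt_c; have -> : r%:R = m%:R * e%:R - c%:R :> R.
  by rewrite -natrM -rc natrD addrK.
rewrite -subr_gt0.
have -> : m%:R * e%:R - c%:R - b * e%:R
    = (m%:R - b) * (e%:R - b * c%:R) + (b * (m%:R - b) - 1) * c%:R by ring.
by rewrite b_root subrr mul0r addr0 mulr_gt0 ?subr_slope_gt0 ?subr_gt0.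
Qed.

End Slope.

Lemma beta_ge1 (m : nat) : (2 <= m)%N -> 1 <= beta m.
Proof.
move=> m_ge2; rewrite /beta ler_pdivlMr ?ltr0n // mul1r -[2]addr0.
apply: lerD; first by rewrite ler_nat.
by rewrite sqrtC_ge0 subr_ge0 -natrX ler_nat (@leq_exp2r 2 m 2).
Qed.

Lemma beta_root (m : nat) : beta m * (m%:R - beta m) = 1.
Proof.
rewrite /beta; set s := sqrtC _.
have s2 : s ^+ 2 = m%:R ^+ 2 - 4 by rewrite sqrtCK.
have -> : (m%:R + s) / 2 * (m%:R - (m%:R + s) / 2) = (m%:R ^+ 2 - s ^+ 2) / 4.
  by field; rewrite ?pnatr_eq0.
by rewrite s2 opprB addrC subrK mulfV ?pnatr_eq0.
Qed.

Section Blocks.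

Variables (F : fieldType) (m d : nat).

(* (F^d)^m is identified with F^(m * d) through mxvec_index. *)
Definition incl_mx (k : 'I_m) : 'M[F]_(d, m * d) :=
  \matrix_(a, i) (i == mxvec_index k a)%:R.

Lemma incl_mx_mul_tr (k j : 'I_m) :
  incl_mx k *m (incl_mx j)^T = if k == j then 1%:M else 0.
Proof.
have idx_eq (a c : 'I_d) :
    (mxvec_index k a == mxvec_index j c) = (k == j) && (a == c).
  apply/eqP/andP => [|[/eqP -> /eqP ->] //].
  by move/cast_ord_inj/enum_rank_inj => [-> ->].
apply/matrixP => a c; rewrite !mxE (bigD1 (mxvec_index k a)) //= big1.
  rewrite !mxE eqxx mul1r addr0 idx_eq.
  by case: (k == j); rewrite ?mxE // eq_sym.
by move=> i /negPf ne_i; rewrite !mxE ne_i mul0r.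
Qed.

Lemma incl_mxK p (k : 'I_m) (U : 'M[F]_(p, d)) :
  U *m incl_mx k *m (incl_mx k)^T = U.
Proof. by rewrite -mulmxA incl_mx_mul_tr eqxx mulmx1. Qed.

Lemma mxrank_mul_incl p (k : 'I_m) (U : 'M[F]_(p, d)) :
  \rank (U *m incl_mx k) = \rank U.
Proof.
apply/eqP; rewrite eqn_leq mxrankM_maxl /=.
by rewrite -{1}(incl_mxK k U) mxrankM_maxl.
Qed.

Lemma sum_incl_mul_tr p (U : 'M[F]_(p, d)) (P : pred 'I_m) (j : 'I_m) :
  ((\sum_(k | P k) <<U *m incl_mx k>>)%MS *m (incl_mx j)^T
    <= if P j then U else 0)%MS.
Proof.
rewrite sumsmxMr_gen; apply/sumsmx_subP => k Pk.
rewrite genmxE (eqmxMr _ (genmxE _)) -mulmxA incl_mx_mul_tr.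
by case: eqP => [<- | _]; rewrite ?Pk ?mulmx1 // mulmx0 sub0mx.
Qed.

Lemma mxdirect_sum_incl p (U : 'M[F]_(p, d)) :
  mxdirect (\sum_(k < m) <<U *m incl_mx k>>)%MS.
Proof.
apply/mxdirect_sumsP => i _; apply/eqP; rewrite -submx0.
set Z := (_ :&: _)%MS.
have /submxP[V defZ] : (Z <= U *m incl_mx i)%MS.
  by rewrite -(genmxE (U *m _)) capmxSl.
have : (Z *m (incl_mx i)^T <= (0 : 'M_(p, d)))%MS.
  have := sum_incl_mul_tr U (fun j => true && (j != i)) i; rewrite eqxx /=.
  by apply: submx_trans; rewrite submxMr ?capmxSr.
clearbody Z; rewrite defZ -mulmxA incl_mxK => /submx0null VU0.
by rewrite mulmxA VU0 mul0mx.
Qed.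

End Blocks.

Arguments incl_mx {F m} d k.

Section Expanding.

Variables (F : fieldType) (m : nat).

Definition rep_image p d N (U : 'M[F]_(p, d)) (f : 'I_m -> 'M[F]_(d, N)) :=
  (\sum_(k < m) <<U *m f k>>)%MS.

Lemma rep_image_sub p d N q (U : 'M[F]_(p, d)) (f : 'I_m -> 'M[F]_(d, N))
    (W : 'M[F]_(q, N)) :
  (forall k, U *m f k <= W)%MS -> (rep_image U f <= W)%MS.
Proof. by move=> sub_f; apply/sumsmx_subP => k _; rewrite genmxE. Qed.

Lemma rep_image_mulmx p d N N' (U : 'M[F]_(p, d)) (f : 'I_m -> 'M[F]_(d, N))
    (M : 'M[F]_(N, N')) :
  (rep_image U (fun k => f k *m M) :=: rep_image U f *m M)%MS.
Proof.
apply: eqmx_sym; apply: eqmx_trans (sumsmxMr_gen _ _ _) _.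
apply: eqmx_sums => k _; apply: eqmx_trans (genmxE _) _.
apply: eqmx_trans (eqmxMr _ (genmxE _)) _.
by rewrite mulmxA; apply: eqmx_sym; apply: genmxE.
Qed.

Lemma mxrank_rep_image_incl p d (U : 'M[F]_(p, d)) :
  \rank (rep_image U (incl_mx d)) = (m * \rank U)%N.
Proof.
rewrite (mxdirectP (mxdirect_sum_incl m U)) /=.
under eq_bigr do rewrite mxrank_gen mxrank_mul_incl.
by rewrite sum_nat_const card_ord.
Qed.

Variables (R : numDomainType) (b : R).

Definition expanding d N (f : 'I_m -> 'M[F]_(d, N)) :=
  forall p (U : 'M[F]_(p, d)), (0 < \rank U)%N ->
    b * (\rank U)%:R < (\rank (rep_image U f))%:R.

Lemma expanding_incl d : b < m%:R -> expanding (incl_mx d).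
Proof.
move=> b_lt_m p U U_gt0.
by rewrite mxrank_rep_image_incl natrM ltr_pM2r ?ltr0n.
Qed.

Lemma expanding_corestrict d N q d' (f : 'I_m -> 'M[F]_(d, N))
    (T : 'M[F]_(q, N)) :
  (forall k, f k <= T)%MS -> (\rank T <= d')%N -> expanding f ->
  exists f' : 'I_m -> 'M[F]_(d, d'), expanding f'.
Proof.
move=> f_T rank_T f_exp.
pose M := pinvmx (row_base T) *m (pid_mx (\rank T) : 'M[F]_(\rank T, d')).
exists (fun k => f k *m M) => p U U_gt0; rewrite rep_image_mulmx.
have im_T : (rep_image U f <= row_base T)%MS.
  rewrite eq_row_base; apply: rep_image_sub => k.
  exact: submx_trans (submxMl _ _) (f_T k).
rewrite /M mulmxA mxrankMfree; last by rewrite /row_free rank_pid_mx.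
suff -> : \rank (rep_image U f *m pinvmx (row_base T)) = \rank (rep_image U f).
  exact: f_exp.
apply/eqP; rewrite eqn_leq mxrankM_maxl /=.
by rewrite -{1}(mulmxKpV im_T) mxrankM_maxl.
Qed.

End Expanding.

Section Reflection.

Variables (F : fieldType) (R : numFieldType) (m : nat) (b : R).
Hypotheses (b_gt0 : 0 < b) (b_root : b * (m%:R - b) = 1).
Variables (a d : nat) (g : 'I_m -> 'M[F]_(a, d)).
Hypothesis g_exp : expanding b g.

Definition concat_mx : 'M[F]_(a, m * d) := \sum_(k < m) g k *m incl_mx d k.

Definition reflection (k : 'I_m) : 'M[F]_(d, m * d) :=
  incl_mx d k *m cokermx concat_mx.

Lemma concat_mx_incl_tr (j : 'I_m) : concat_mx *m (incl_mx d j)^T = g j.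
Proof.
rewrite mulmx_suml (bigD1 j) //= big1 => [|k ne_kj].
  by rewrite -mulmxA incl_mx_mul_tr eqxx mulmx1 addr0.
by rewrite -mulmxA incl_mx_mul_tr (negPf ne_kj) mulmx0.
Qed.

Lemma row_free_concat_mx : row_free concat_mx.
Proof.
rewrite -kermx_eq0 -mxrank_eq0 eqn0Ngt; apply/negP => /g_exp.
have -> : rep_image (kermx concat_mx) g = 0.
  apply/eqP; rewrite -submx0; apply: rep_image_sub => k.
  by rewrite -concat_mx_incl_tr mulmxA mulmx_ker mul0mx sub0mx.
rewrite mxrank0 => /(le_lt_trans (mulr_ge0 (ltW b_gt0) (ler0n _ _))).
by rewrite ltxx.
Qed.

Lemma expanding_reflection : expanding b reflection.
Proof.
move=> p U U_gt0; rewrite rep_image_mulmx.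
set S := rep_image U (incl_mx d); set C := cokermx concat_mx.
have := mxrank_mul_ker S C; rewrite mxrank_rep_image_incl.
move/(slope_quotient b_gt0 b_root); apply.
(* S :&: kermx C is the image under concat_mx of some X whose image under g
   lies in U, so expansion of g bounds its rank by rank U / b. *)
set Y := (S :&: kermx C)%MS.
have Y_concat : (Y <= concat_mx)%MS by rewrite submxE -sub_kermx capmxSr.
pose X := Y *m pinvmx concat_mx.
have XY : X *m concat_mx = Y by rewrite mulmxKpV.
have rank_YX : (\rank Y <= \rank X)%N by rewrite -{1}XY mxrankM_maxl.
have im_X : (rep_image X g <= U)%MS.
  apply: rep_image_sub => k; rewrite -concat_mx_incl_tr mulmxA XY.
  apply: submx_trans (sum_incl_mul_tr U predT k).
  exact: submxMr (capmxSl _ _).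
apply: (@le_lt_trans _ _ (b * (\rank X)%:R)).
  by rewrite ler_wpM2l ?ler_nat // ltW.
have [X0 | X_gt0] := posnP (\rank X); first by rewrite X0 mulr0 ltr0n.
by apply: lt_le_trans (g_exp X_gt0) _; rewrite ler_nat mxrankS.
Qed.

End Reflection.

Lemma exists_expanding (F : fieldType) (R : numFieldType) (m : nat) (b : R) :
    1 <= b -> b * (m%:R - b) = 1 ->
  forall d1 d2, b * d1%:R < d2%:R ->
  exists f : 'I_m -> 'M[F]_(d1, d2), expanding b f.
Proof.
move=> b_ge1 b_root d1 d2; have b_gt0 : 0 < b := lt_le_trans ltr01 b_ge1.
elim/ltn_ind: d2 d1 => d2 IH d1 lt_d.
have [mul_le | mul_gt] := leqP (m * d1) d2.
  apply: (expanding_corestrict (T := 1%:M) _ _ (expanding_incl _)).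
  - by move=> k; apply: submx1.
  - by rewrite mxrank1.
  - by rewrite -subr_gt0 (subr_slope_gt0 b_gt0 b_root).
have lt_d12 : (d1 < d2)%N.
  by rewrite -(ltr_nat R); apply: le_lt_trans lt_d; rewrite ler_peMl.
have [g g_exp] :=
  IH d1 lt_d12 _ (slope_reflection b_gt0 b_root lt_d (ltnW mul_gt)).
apply: (expanding_corestrict (T := cokermx (concat_mx g)) _ _
         (expanding_reflection b_gt0 b_root g_exp)).
- by move=> k; rewrite /reflection submxMl.
- by rewrite mxrank_coker (eqP (row_free_concat_mx b_gt0 g_exp)) subKn // ltnW.
Qed.

Theorem lemma3p3 (F : closedFieldType) (m d1 d2 e1 e2 : nat) :
  (2 <= m)%N ->
  (e1, e2) != (0%N, 0%N) ->
  (e1 <= d1)%N -> (e2 <= d2)%N ->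
  beta m * d1%:R < d2%:R ->
  subrep_arrow F m e1 e2 d1 d2 ->
  beta m * e1%:R < e2%:R.
Proof.
move=> m_ge2 e_neq0 _ _ lt_d subrep.
have [f f_exp] := exists_expanding F (beta_ge1 m_ge2) (beta_root m) lt_d.
have [e1_0 | e1_gt0] := posnP e1.
  by move: e_neq0; rewrite e1_0 mulr0 ltr0n lt0n; apply: contraNneq => ->.
have [U1 [U2 [rank_U1 rank_U2 f_U]]] := subrep f.
rewrite -rank_U1 -rank_U2 in e1_gt0 *.
apply: lt_le_trans (f_exp _ U1 e1_gt0) _.
by rewrite ler_nat mxrankS ?rep_image_sub.
Qed.
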